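(* Let $(\mathfrak{g},[\cdot,\cdot]_{\mathfrak{g}},\phi_{\mathfrak{g}})$ be a weakly involutive Hom-Lie algebra, $r\in\mathfrak g\otimes\mathfrak g$, and $\Delta(x)=(\mathrm{ad}_x\otimes\phi_{\mathfrak g}+\phi_{\mathfrak g}\otimes\mathrm{ad}_x)r$. Then for all $x,y\in\mathfrak g$ (juxtaposition denoting composition): (a) $\Delta(\phi_{\mathfrak g}(x))-(\phi_{\mathfrak g}\otimes\phi_{\mathfrak g})\Delta(x)=(\mathrm{ad}_{\phi_{\mathfrak g}(x)}\phi_{\mathfrak g}\otimes\phi_{\mathfrak g}-\phi_{\mathfrak g}\otimes\mathrm{ad}_{\phi_{\mathfrak g}(x)}\phi_{\mathfrak g})(\phi_{\mathfrak g}\otimes\mathrm{Id}-\mathrm{Id}\otimes\phi_{\mathfrak g})r$; (b) $(\phi_{\mathfrak g}^2\otimes\mathrm{Id})\Delta(x)-\Delta(x)=(\phi_{\mathfrak g}\otimes\mathrm{ad}_x)(\phi_{\mathfrak g}\otimes\mathrm{Id}+\mathrm{Id}\otimes\phi_{\mathfrak g})(\phi_{\mathfrak g}\otimes\mathrm{Id}-\mathrm{Id}\otimes\phi_{\mathfrak g})r$; (c) $\Delta[x,y]_{\mathfrak g}-(\mathrm{ad}_{\phi_{\mathfrak g}(x)}\Delta(y)-\mathrm{ad}_{\phi_{\mathfrak g}(y)}\Delta(x))=(\mathrm{ad}_{[x,y]_{\mathfrak g}}\phi_{\mathfrak g}\otimes\phi_{\mathfrak g}-\phi_{\mathfrak g}\otimes\mathrm{ad}_{[x,y]_{\mathfrak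 g}}\phi_{\mathfrak g})(\phi_{\mathfrak g}\otimes\mathrm{Id}-\mathrm{Id}\otimes\phi_{\mathfrak g})r$.
   Context: A Hom-Lie algebra $(\mathfrak{g},[\cdot,\cdot]_{\mathfrak{g}},\phi_{\mathfrak{g}})$: skew-symmetric bilinear bracket and linear map with $\phi_{\mathfrak g}[x,y]=[\phi_{\mathfrak g}x,\phi_{\mathfrak g}y]$ and $[\phi_{\mathfrak g}(x),[y,z]]+[\phi_{\mathfrak g}(y),[z,x]]+[\phi_{\mathfrak g}(z),[x,y]]=0$; weakly involutive if $[\phi_{\mathfrak g}^2(x),y]=[x,y]$ for all $x,y$. $\mathrm{ad}_xy=[x,y]_{\mathfrak g}$; for $z\in\mathfrak g$ and $t\in\mathfrak g\otimes\mathfrak g$, $\mathrm{ad}_zt$ means $(\mathrm{ad}_z\otimes\phi_{\mathfrak g}+\phi_{\mathfrak g}\otimes\mathrm{ad}_z)t$ (this is the meaning of $\mathrm{ad}_{\phi_{\mathfrak g}(x)}\Delta(y)$ in (c)). *)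

(* Finite-dimensional Hom-Lie algebras g = K^n (row vectors),
   with g ⊗ g identified with n×n matrices: the tensor sum_{ij} t_ij e_i ⊗ e_j
   is the matrix t, and the pure tensor u ⊗ v is the outer product u^T *m v. *)
From mathcomp Require Import all_boot all_order all_algebra.
Set Implicit Arguments. Unset Strict Implicit. Unset Printing Implicit Defensive.
Import GRing.Theory.
Local Open Scope ring_scope.

Definition tens (K : fieldType) (n : nat) (u v : 'rV[K]_n) : 'M[K]_n := u^T *m v.

Definition tmap (K : fieldType) (n : nat) (f h : 'rV[K]_n -> 'rV[K]_n)
  (t : 'M[K]_n) : 'M[K]_n :=
  \sum_(i < n) \sum_(j < n)
     t i j *: tens (f (delta_mx ord0 i)) (h (delta_mx ord0 j)).

Definition HomLie (K : fieldType) (n : nat)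
  (br : 'rV[K]_n -> 'rV[K]_n -> 'rV[K]_n) (phi : 'rV[K]_n -> 'rV[K]_n) : Prop :=
  (forall y, linear (br ^~ y)) /\
  (forall x, linear (br x)) /\
  linear phi /\
  (forall x y, br x y = - br y x) /\
  (forall x y, phi (br x y) = br (phi x) (phi y)) /\
  (forall x y z, br (phi x) (br y z) + br (phi y) (br z x)
                     + br (phi z) (br x y) = 0).

Definition weakly_involutive (K : fieldType) (n : nat)
  (br : 'rV[K]_n -> 'rV[K]_n -> 'rV[K]_n) (phi : 'rV[K]_n -> 'rV[K]_n) : Prop :=
  forall x y, br (phi (phi x)) y = br x y.

Definition ad (K : fieldType) (n : nat)
  (br : 'rV[K]_n -> 'rV[K]_n -> 'rV[K]_n) (x : 'rV[K]_n) : 'rV[K]_n -> 'rV[K]_n :=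
  br x.

Definition adT (K : fieldType) (n : nat)
  (br : 'rV[K]_n -> 'rV[K]_n -> 'rV[K]_n) (phi : 'rV[K]_n -> 'rV[K]_n)
  (z : 'rV[K]_n) (t : 'M[K]_n) : 'M[K]_n :=
  tmap (ad br z) phi t + tmap phi (ad br z) t.

Definition Delta (K : fieldType) (n : nat)
  (br : 'rV[K]_n -> 'rV[K]_n -> 'rV[K]_n) (phi : 'rV[K]_n -> 'rV[K]_n)
  (r : 'M[K]_n) (x : 'rV[K]_n) : 'M[K]_n :=
  adT br phi x r.

From HB Require Import structures.
From mathcomp Require Import all_boot all_order all_algebra ring.
Set Implicit Arguments. Unset Strict Implicit. Unset Printing Implicit Defensive.
Import GRing.Theory.
Local Open Scope ring_scope.

(* Writing F for the matrix of a map f, the tensor map (f ⊗ h) t is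
   F^T t H, so Δ(x) = A_x^T r Φ + Φ^T r A_x with A_z the matrix of ad_z and Φ
   that of φ.  The three identities then become identities between matrix
   products, which follow from four relations alone: A_x Φ = Φ A_(φ x)
   (φ is multiplicative), Φ Φ A_z = A_z = A_z Φ Φ (weak involutivity) and
   Φ A_[x,y] = A_y A_(φ x) - A_x A_(φ y) (Hom-Jacobi). *)

Lemma linear_morphN (R : pzRingType) (U V : lmodType R) (f : U -> V) :
  linear f -> {morph f : u / - u}.
Proof.
move=> lin_f; pose fL : {linear U -> V} :=
  HB.pack f (GRing.isLinear.Build R _ _ _ f lin_f).
exact: (linearN fL).
Qed.

Section LinearMapMatrices.
Variables (K : fieldType) (n : nat).
Implicit Types (f g h : 'rV[K]_n -> 'rV[K]_n) (t : 'M[K]_n).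

Lemma mul_rV_lin1_linear f : linear f -> forall u, u *m lin1_mx f = f u.
Proof.
move=> lin_f; pose fL : {linear 'rV[K]_n -> 'rV[K]_n} :=
  HB.pack f (GRing.isLinear.Build K _ _ _ f lin_f).
exact: (mul_rV_lin1 fL).
Qed.

Lemma eq_lin1_mx f g : f =1 g -> lin1_mx f = lin1_mx g.
Proof. by move=> eq_fg; apply/matrixP => i j; rewrite !mxE eq_fg. Qed.

Lemma lin1_mxB f g : lin1_mx (fun u => f u - g u) = lin1_mx f - lin1_mx g.
Proof. by apply/matrixP => i j; rewrite !mxE. Qed.

Lemma lin1_mx_id : lin1_mx (@id 'rV[K]_n) = 1%:M.
Proof. by apply/matrixP => i j; rewrite !mxE eqxx eq_sym. Qed.

Lemma row_lin1_mx f i : row i (lin1_mx f) = f (delta_mx 0 i).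
Proof. by apply/rowP => j; rewrite !mxE. Qed.

Lemma lin1_mx_comp f g : linear f -> lin1_mx (f \o g) = lin1_mx g *m lin1_mx f.
Proof.
move=> lin_f; apply/row_matrixP => i.
by rewrite row_mul !row_lin1_mx mul_rV_lin1_linear.
Qed.

Lemma tmapE f h t : tmap f h t = (lin1_mx f)^T *m t *m lin1_mx h.
Proof.
apply/matrixP => a b; rewrite /tmap summxE !mxE.
under [RHS]eq_bigr => j _ do rewrite !mxE big_distrl /=.
rewrite exchange_big /=; apply: eq_bigr => i _; rewrite summxE.
apply: eq_bigr => j _; rewrite !mxE big_ord1 !mxE.
by rewrite mulrA [_ * t i j]mulrC.
Qed.

End LinearMapMatrices.

Definition adT_mx (R : pzSemiRingType) (m : nat) (P Z t : 'M[R]_m) : 'M[R]_m :=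
  Z^T *m t *m P + P^T *m t *m Z.

Lemma adTE (K : fieldType) (n : nat) (br : 'rV[K]_n -> 'rV[K]_n -> 'rV[K]_n)
    (phi : 'rV[K]_n -> 'rV[K]_n) z t :
  adT br phi z t = adT_mx (lin1_mx phi) (lin1_mx (br z)) t.
Proof. by rewrite /adT /adT_mx !tmapE. Qed.

(* P stands for the matrix of φ; X, Y, A, B, C for those of ad_x, ad_y,
   ad_(φ x), ad_(φ y) and ad_[x,y]. *)
Section TwistedTensorIdentities.
Variables (R : comPzRingType) (m : nat) (P r : 'M[R]_m).
Let s := P^T *m r - r *m P.

Lemma adT_mx_phi_defect (A X : 'M[R]_m) : X *m P = P *m A -> P *m P *m A = A ->
  adT_mx P A r - P^T *m adT_mx P X r *m P
  = (P *m A)^T *m s *m P - P^T *m s *m (P *m A).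
Proof.
move=> XP PPA.
(* After full left association a relation can only be used transposed (as a
   prefix) or behind an arbitrary left factor M. *)
have XP_tr : P^T *m X^T = A^T *m P^T by rewrite -!trmx_mul XP.
have XP_l k (M : 'M_(k, m)) : M *m X *m P = M *m P *m A by rewrite -!mulmxA XP.
have PPA_tr : A^T *m P^T *m P^T = A^T by rewrite -!trmx_mul mulmxA PPA.
have PPA_l k (M : 'M_(k, m)) : M *m P *m P *m A = M *m A.
  by rewrite -!mulmxA (mulmxA P) PPA.
rewrite /adT_mx /s.
rewrite !(mulmxDl, mulmxDr, mulmxBl, mulmxBr, mulmxN, mulNmx, trmx_mul, mulmxA).
rewrite XP_tr PPA_tr XP_l PPA_l.
by apply/matrixP => i j; rewrite !mxE; ring.
Qed.

Lemma adT_mx_phi2_defect (X : 'M[R]_m) : X *m P *m P = X -> P *m P *m X = X ->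
  (P *m P)^T *m adT_mx P X r - adT_mx P X r = P^T *m (P^T *m s + s *m P) *m X.
Proof.
move=> XPP PPX.
have XPP_tr : P^T *m P^T *m X^T = X^T by rewrite -!trmx_mul mulmxA XPP.
have PPX_l k (M : 'M_(k, m)) : M *m P *m P *m X = M *m X.
  by rewrite -!mulmxA (mulmxA P) PPX.
rewrite /adT_mx /s.
rewrite !(mulmxDl, mulmxDr, mulmxBl, mulmxBr, mulmxN, mulNmx, trmx_mul, mulmxA).
rewrite XPP_tr PPX_l.
by apply/matrixP => i j; rewrite !mxE; ring.
Qed.

Lemma adT_mx_cocycle_defect (A B C X Y : 'M[R]_m) :
    X *m P = P *m A -> Y *m P = P *m B -> P *m C = Y *m A - X *m B ->
    P *m P *m C = C ->
  adT_mx P C r - (adT_mx P A (adT_mx P Y r) - adT_mx P B (adT_mx P X r))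
  = (P *m C)^T *m s *m P - P^T *m s *m (P *m C).
Proof.
move=> XP YP PC PPC.
have XP_tr : P^T *m X^T = A^T *m P^T by rewrite -!trmx_mul XP.
have YP_tr : P^T *m Y^T = B^T *m P^T by rewrite -!trmx_mul YP.
have XP_l k (M : 'M_(k, m)) : M *m X *m P = M *m P *m A by rewrite -!mulmxA XP.
have YP_l k (M : 'M_(k, m)) : M *m Y *m P = M *m P *m B by rewrite -!mulmxA YP.
have YA_tr : A^T *m Y^T = C^T *m P^T + B^T *m X^T.
  by rewrite -!trmx_mul -linearD /= PC subrK.
have YA_l k (M : 'M_(k, m)) : M *m Y *m A = M *m P *m C + M *m X *m B.
  by rewrite -!mulmxA -mulmxDr PC subrK.
have PPC_tr : C^T *m P^T *m P^T = C^T by rewrite -!trmx_mul mulmxA PPC.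
have PPC_l k (M : 'M_(k, m)) : M *m P *m P *m C = M *m C.
  by rewrite -!mulmxA (mulmxA P) PPC.
rewrite /adT_mx /s.
rewrite !(mulmxDl, mulmxDr, mulmxBl, mulmxBr, mulmxN, mulNmx, trmx_mul, mulmxA).
rewrite XP_tr YP_tr XP_l YP_l YA_tr YA_l PPC_tr PPC_l.
rewrite !(mulmxDl, mulmxDr, mulmxA).
by apply/matrixP => i j; rewrite !mxE; ring.
Qed.

End TwistedTensorIdentities.

Section HomLieMatrices.
Variables (K : fieldType) (n : nat).
Variables (br : 'rV[K]_n -> 'rV[K]_n -> 'rV[K]_n) (phi : 'rV[K]_n -> 'rV[K]_n).
Hypothesis hl : HomLie br phi.

Local Notation P := (lin1_mx phi).
Local Notation ad_mx z := (lin1_mx (br z)).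

Lemma HomLie_linear_br z : linear (br z).
Proof. by case: hl => _ []. Qed.

Lemma HomLie_linear_phi : linear phi.
Proof. by case: hl => _ [_ []]. Qed.

Let br_anti x y : br x y = - br y x.
Proof. by case: hl => _ [_ [_ []]]. Qed.

Let phi_br x y : phi (br x y) = br (phi x) (phi y).
Proof. by case: hl => _ [_ [_ [_ []]]]. Qed.

Let br_jacobi x y z :
  br (phi x) (br y z) + br (phi y) (br z x) + br (phi z) (br x y) = 0.
Proof. by case: hl => _ [_ [_ [_ []]]]. Qed.

Lemma br_brl_phi x y u :
  br (br x y) (phi u) = br (phi x) (br y u) - br (phi y) (br x u).
Proof.
have := br_jacobi x y u.
rewrite [br u x]br_anti (linear_morphN (HomLie_linear_br _)) [br (phi u) _]br_anti.
by move/eqP; rewrite subr_eq0 => /eqP.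
Qed.

Lemma ad_mx_phi x : ad_mx x *m P = P *m ad_mx (phi x).
Proof.
rewrite -(lin1_mx_comp _ HomLie_linear_phi) -(lin1_mx_comp _ (HomLie_linear_br _)).
by apply: eq_lin1_mx => u /=; rewrite phi_br.
Qed.

Lemma phi_ad_mx_br x y :
  P *m ad_mx (br x y) = ad_mx y *m ad_mx (phi x) - ad_mx x *m ad_mx (phi y).
Proof.
rewrite -!(lin1_mx_comp _ (HomLie_linear_br _)) -lin1_mxB.
by apply: eq_lin1_mx => u /=; rewrite br_brl_phi.
Qed.

Hypothesis winv : weakly_involutive br phi.

Let br_phi2r z u : br z (phi (phi u)) = br z u.
Proof. by rewrite br_anti winv -br_anti. Qed.

Lemma phi2_ad_mx z : P *m P *m ad_mx z = ad_mx z.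
Proof.
rewrite -(lin1_mx_comp _ HomLie_linear_phi) -(lin1_mx_comp _ (HomLie_linear_br _)).
by apply: eq_lin1_mx => u /=; rewrite br_phi2r.
Qed.

Lemma ad_mx_phi2 z : ad_mx z *m P *m P = ad_mx z.
Proof.
rewrite -!(lin1_mx_comp _ HomLie_linear_phi).
by apply: eq_lin1_mx => u /=; rewrite !phi_br winv br_phi2r.
Qed.

End HomLieMatrices.

Theorem lemma4p1 (K : fieldType) (n : nat)
  (br : 'rV[K]_n -> 'rV[K]_n -> 'rV[K]_n) (phi : 'rV[K]_n -> 'rV[K]_n)
  (r : 'M[K]_n) :
  HomLie br phi -> weakly_involutive br phi ->
  forall x y : 'rV[K]_n,
  let D := Delta br phi r in
  let s := tmap phi id r - tmap id phi r in
  [/\ (* (a) *)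
      D (phi x) - tmap phi phi (D x) =
        tmap (ad br (phi x) \o phi) phi s - tmap phi (ad br (phi x) \o phi) s,
      (* (b) *)
      tmap (phi \o phi) id (D x) - D x =
        tmap phi (ad br x) (tmap phi id s + tmap id phi s) &
      (* (c) *)
      D (br x y) - (adT br phi (phi x) (D y) - adT br phi (phi y) (D x)) =
        tmap (ad br (br x y) \o phi) phi s - tmap phi (ad br (br x y) \o phi) s].
Proof.
move=> hl winv x y D s.
have lin_phi := HomLie_linear_phi hl; have lin_ad := HomLie_linear_br hl.
rewrite /D /Delta /s !adTE !tmapE (lin1_mx_comp phi lin_phi).
rewrite (lin1_mx_comp phi (lin_ad (phi x))) (lin1_mx_comp phi (lin_ad (br x y))).
rewrite lin1_mx_id trmx1 !mulmx1 !mul1mx.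
split.
- exact: adT_mx_phi_defect (ad_mx_phi hl x) (phi2_ad_mx hl winv (phi x)).
- exact: adT_mx_phi2_defect (ad_mx_phi2 hl winv x) (phi2_ad_mx hl winv x).
- exact: adT_mx_cocycle_defect (ad_mx_phi hl x) (ad_mx_phi hl y)
    (phi_ad_mx_br hl x y) (phi2_ad_mx hl winv (br x y)).
Qed.
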